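(* Let $p$ be an odd prime, $n\ge1$, and let $f:V(K_n)\to\{1,\dots,n\}$ be any bijection on the vertex set of the complete graph $K_n$. Put $q=\lfloor n/p\rfloor$, $r=n-qp$, $\psi=\max\{0,2r-p+1\}$, $\delta_s=1$ if $s$ is even and $0$ otherwise, and $\mathcal S=\mathcal S_1+\mathcal S_2$ with $$\mathcal S_1=\sum_{\substack{s=2\\ s\ne p}}^{r+1}(s-1-\delta_s)(s/p),\qquad \mathcal S_2=\sum_{\substack{s=r+2\\ s\ne p}}^{2r}(2r-s+1-\delta_s)(s/p).$$ Then, with $e_{f_p^*}(i)$ the number of edges of $K_n$ with label $i$ under the induced edge labeling $f_p^*$, $$e_{f_p^*}(0)-e_{f_p^*}(1)=\tfrac12\left(2nq-pq^2-q+\psi\right)-\tfrac12\,\mathcal S .$$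
   Context: For an odd prime $p$ and an integer $a$ not divisible by $p$, $(a/p)$ denotes the Legendre symbol: $1$ if $a$ is a quadratic residue mod $p$, $-1$ otherwise. Empty sums equal $0$. Given a graph $G$ of order $n$ and a bijection $f:V(G)\to\{1,\dots,n\}$, the induced edge labeling $f_p^*:E(G)\to\{0,1\}$ is defined by $f_p^*(uv)=0$ if $p\mid f(u)+f(v)$ or $((f(u)+f(v))/p)=-1$, and $f_p^*(uv)=1$ if $((f(u)+f(v))/p)=1$; $e_{f_p^*}(i)$ is the number of edges with label $i$. *)

From mathcomp Require Import all_boot all_order all_algebra.
Set Implicit Arguments. Unset Strict Implicit. Unset Printing Implicit Defensive.
Import Order.TTheory GRing.Theory Num.Theory.

Definition quad_res (p a : nat) : bool :=
  [exists x : 'I_p, (x * x) %% p == a %% p].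

(* Legendre symbol (a/p) for odd prime p; value 0 when p | a (never used
   in the statement except through the labeling, which treats p | a apart). *)
Definition legendre (p a : nat) : int :=
  if p %| a then 0%R else if quad_res p a then 1%R else (-1)%R.

Definition Kn_edges (n : nat) : {set {set 'I_n}} :=
  [set e : {set 'I_n} | #|e| == 2].

Definition edge_label (p n : nat) (f : 'I_n -> nat) (e : {set 'I_n}) : nat :=
  let s := \sum_(v in e) f v in
  if p %| s then 0 else if legendre p s == 1%R then 1 else 0.

Definition num_edges_label (p n : nat) (f : 'I_n -> nat) (i : nat) : nat :=
  #|[set e in Kn_edges n | edge_label p f e == i]|.

Definition delta (s : nat) : int := if odd s then 0%R else 1%R.

From mathcomp Require Import all_boot all_order all_algebra.
From mathcomp Require Import zify ring lra.
Set Implicit Arguments. Unset Strict Implicit. Unset Printing Implicit Defensive.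
Import Order.TTheory GRing.Theory Num.Theory.

(* Each edge {u, v} of K_n contributes [label_weight p (f u + f v)] to
   e(0) - e(1): 1 if p divides the label sum, minus its Legendre symbol
   otherwise.  As f is a bijection onto [1, n], twice the difference is the sum
   of this weight over ordered pairs of distinct x, y in [1, n].  The weight is
   p-periodic with sum 1 over a period (the Legendre symbol sums to 0 there),
   and so is s |-> weight (2 s) because 2 is invertible mod p; hence enlarging
   n by p adds 2n + p - 1 to the pair sum.  This reduces everything to
   n = r < p, where grouping the pairs by their sum s yields psi (from s = p,
   the only multiple of p in range) minus S. *)

Lemma dvdn_modl p s : (p %| s %% p) = (p %| s).
Proof. by rewrite {2}(divn_eq s p) dvdn_addr ?dvdn_mull. Qed.

Lemma small_dvdn_eq0 p n : n < p -> (p %| n) = (n == 0).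
Proof. by case: n => [|n] lt; rewrite ?dvdn0 // gtnNdvd. Qed.

Lemma sqr_subn_mod p x : x <= p -> (p - x) * (p - x) = x * x %[mod p].
Proof.
move=> /subnK p_eq; rewrite -(modnMDl (2 * x)); move: (p - x) p_eq => y <-.
have -> : 2 * x * (y + x) + y * y = (y + x) * (y + x) + x * x by nia.
by rewrite modnMDl.
Qed.

Lemma eq_sqr_mod p x y : prime p -> x + y < p ->
  (x * x == y * y %[mod p]) = (x == y).
Proof.
move=> pp.
wlog le_xy : x y / x <= y => [hwlog|lt_p].
  by case/orP: (leq_total x y) => /hwlog; rewrite // addnC eq_sym [y == x]eq_sym.
rewrite eq_sym eqn_mod_dvd ?leq_mul // !mulnn subn_sqr Euclid_dvdM //.
by rewrite !small_dvdn_eq0; lia.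
Qed.

Lemma eqn_mod_mull k p x y : coprime k p -> x < p -> y < p ->
  (k * x == k * y %[mod p]) = (x == y).
Proof.
move=> co_kp.
wlog le_xy : x y / x <= y => [hwlog lt_xp lt_yp|_ lt_yp].
  case/orP: (leq_total x y) => le; first exact: hwlog.
  by rewrite [LHS]eq_sym [RHS]eq_sym hwlog.
rewrite eq_sym eqn_mod_dvd ?leq_mul2l ?le_xy ?orbT // -mulnBr.
by rewrite Gauss_dvdr 1?coprime_sym // small_dvdn_eq0; lia.
Qed.

Section QuadraticResidues.
Variable p : nat.
Hypotheses (p_prime : prime p) (p_odd : odd p).

Let p_gt0 : 0 < p. Proof. exact: prime_gt0. Qed.
Let p_half : p = (p./2).*2.+1. Proof. by rewrite -[p in LHS]odd_double_half p_odd. Qed.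

Lemma nonzero_quad_resP (a : 'I_p) :
  reflect (exists2 x, 0 < x <= p./2 & x * x = a %[mod p])
          ((a != 0 :> nat) && quad_res p a).
Proof.
apply: (iffP andP) => [[a_neq0 /existsP[x /eqP sq_x]]|[x /andP[x_gt0 x_le] sq_x]].
  have x_gt0 : 0 < x.
    rewrite lt0n; move: a_neq0; apply: contra_neq => x0.
    by rewrite -(modn_small (ltn_ord a)) -sq_x x0 mod0n.
  have [x_le|x_gt] := leqP x p./2; first by exists x; rewrite ?x_gt0.
  exists (p - x); first by have := ltn_ord x; lia.
  by rewrite sqr_subn_mod // ltnW.
split.
  apply/eqP => a0; move/eqP: sq_x; rewrite a0 mod0n -/(p %| x * x).
  by rewrite Euclid_dvdM // orbb small_dvdn_eq0; lia.
have x_lt : x < p by lia.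
by apply/existsP; exists (Ordinal x_lt); apply/eqP.
Qed.

Lemma card_nonzero_quad_res :
  #|[set a : 'I_p | (a != 0 :> nat) && quad_res p a]| = p./2.
Proof.
pose sqr (x : 'I_(p./2)) : 'I_p := Ordinal (ltn_pmod (x.+1 * x.+1) p_gt0).
have -> : [set a : 'I_p | (a != 0 :> nat) && quad_res p a] = sqr @: 'I_(p./2).
  apply/setP => a; rewrite inE; apply/nonzero_quad_resP/imsetP => [[x x_range sq_x]|[x _ ->]].
    have x_lt : x.-1 < p./2 by lia.
    exists (Ordinal x_lt) => //; apply: val_inj.
    by rewrite /= prednK ?sq_x ?modn_small //; case/andP: x_range.
  by exists x.+1; rewrite /= ?modn_mod //; lia.
rewrite card_imset ?card_ord // => x y /(congr1 val) /= /eqP.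
rewrite eq_sqr_mod // => [/eqP[]|]; first exact: val_inj.
by have := ltn_ord x; have := ltn_ord y; have := p_half; lia.
Qed.

End QuadraticResidues.

Local Open Scope ring_scope.

Lemma sumr_indicator (T : finType) (A : {set T}) :
  \sum_(i : T) ((i \in A)%:R : int) = #|A|%:R.
Proof. by rewrite -sumr_const [RHS]big_mkcond; apply: eq_bigr => i _; case: (i \in A). Qed.

Lemma sum_legendre p : prime p -> odd p -> \sum_(i < p) legendre p i = 0.
Proof.
move=> p_prime p_odd; have p_gt0 := prime_gt0 p_prime.
have p_half : p = (p./2).*2.+1 by rewrite -[p in LHS]odd_double_half p_odd.
set Q := [set a : 'I_p | (a != 0 :> nat) && quad_res p a].
have legendreE (i : 'I_p) :
    legendre p i = (i \in Q)%:R *+ 2 - (i != 0 :> nat)%:R.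
  rewrite /legendre inE small_dvdn_eq0 //.
  by case: (i == 0 :> nat); case: (quad_res p i).
rewrite (eq_bigr _ (fun i _ => legendreE i)) sumrB sumrMnl sumr_indicator.
rewrite card_nonzero_quad_res // -(big_mkord xpredT (fun i => (i != 0 : nat)%:R)).
rewrite big_ltn //= add0r (eq_big_nat _ _ (F2 := fun => 1)) => [|i /andP[i_gt0 _]].
  by rewrite sumr_const_nat subn1 [in p.-1]p_half -mul2n natrM mulr_natl subrr.
by rewrite -lt0n i_gt0.
Qed.

Section PeriodicSums.
Variables (V : nmodType) (p : nat) (h : nat -> V).
Hypothesis h_periodic : forall s, h (s + p)%N = h s.

Lemma periodic_mod s : h (s %% p)%N = h s.
Proof.
rewrite {2}(divn_eq s p); elim: (s %/ p)%N => [|k IHk]; first by rewrite add0n.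
by rewrite mulSn -addnA addnC h_periodic.
Qed.

Lemma sum_periodic_shift k : \sum_(0 <= i < p) h (i + k)%N = \sum_(0 <= i < p) h i.
Proof.
elim: k => [|k IHk]; first by apply: eq_bigr => i _; rewrite addn0.
case: p h_periodic IHk => [|p'] h_per IHk; first by rewrite !big_geq.
rewrite -IHk [LHS]big_nat_recr // [RHS]big_nat_recl //= add0n.
rewrite addnS -addSn addnC h_per addrC; congr (_ + _).
by apply: eq_bigr => i _; rewrite addnS addSn.
Qed.

Lemma sum_periodic_window m : \sum_(m <= i < m + p) h i = \sum_(0 <= i < p) h i.
Proof. by rewrite (addnC m p) -{1}[m]add0n big_addn addnK sum_periodic_shift. Qed.

Lemma sum_periodic_mull k : coprime k p ->
  \sum_(0 <= i < p) h (k * i)%N = \sum_(0 <= i < p) h i.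
Proof.
move=> co_kp; have [->|p_gt0] := posnP p; first by rewrite !big_geq.
pose mulk (j : 'I_p) : 'I_p := Ordinal (ltn_pmod (k * j) p_gt0).
have mulk_inj : injective mulk.
  by move=> x y /(congr1 val)/eqP; rewrite /= eqn_mod_mull // => /eqP/val_inj.
rewrite !big_mkord [RHS](reindex_inj mulk_inj).
by apply: eq_bigr => i _; rewrite periodic_mod.
Qed.

End PeriodicSums.

Definition label_weight (p s : nat) : int :=
  if (p %| s)%N then 1 else - legendre p s.

Lemma legendre_mod p s : legendre p (s %% p) = legendre p s.
Proof. by rewrite /legendre /quad_res dvdn_modl modn_mod. Qed.

Lemma label_weight_addr p s : label_weight p (s + p) = label_weight p s.
Proof.
by rewrite /label_weight dvdn_addl // -legendre_mod modnDr legendre_mod.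
Qed.

(* The sum of [g (x + y)] over ordered pairs of distinct [x, y] in [[1, m]]. *)
Definition pair_sum (g : nat -> int) (m : nat) : int :=
  \sum_(0 <= a < m) \sum_(0 <= b < m) g (a + b + 2)%N
  - \sum_(0 <= a < m) g (2 * a + 2)%N.

Section LabelWeightSums.
Variable p : nat.
Hypotheses (p_prime : prime p) (p_odd : odd p).

Lemma sum_label_weight : \sum_(0 <= i < p) label_weight p i = 1.
Proof.
have p_gt0 := prime_gt0 p_prime.
have legendre0 : legendre p 0 = 0 by rewrite /legendre dvdn0.
have := sum_legendre p_prime p_odd.
rewrite -(big_mkord xpredT (legendre p)) big_ltn // legendre0 add0r => sum_eq0.
rewrite big_ltn // {1}/label_weight dvdn0.
rewrite (eq_big_nat _ _ (F2 := fun i => - legendre p i)) => [|i /andP[i_gt0 lt_ip]].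
  by rewrite sumrN sum_eq0 oppr0 addr0.
by rewrite /label_weight small_dvdn_eq0 // eqn0Ngt i_gt0.
Qed.

Lemma sum_window_label_weight k m :
  \sum_(m <= b < m + p) label_weight p (b + k) = 1.
Proof.
rewrite (@sum_periodic_window _ p (fun b => label_weight p (b + k))) => [|s].
  by rewrite sum_periodic_shift ?sum_label_weight // => s; rewrite label_weight_addr.
by rewrite addnAC label_weight_addr.
Qed.

Lemma sum_window_label_weight_double m :
  \sum_(m <= a < m + p) label_weight p (2 * a + 2) = 1.
Proof.
have p_coprime2 : coprime 2 p by rewrite prime_coprime // dvdn2 p_odd.
rewrite (@sum_periodic_window _ p (fun a => label_weight p (2 * a + 2))) => [|s].
  rewrite (@sum_periodic_mull _ p (fun j => label_weight p (j + 2))) // => [|s].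
    by rewrite sum_periodic_shift ?sum_label_weight // => s; rewrite label_weight_addr.
  by rewrite addnAC label_weight_addr.
by rewrite (_ : 2 * (s + p) + 2 = 2 * s + 2 + p + p)%N ?label_weight_addr //; lia.
Qed.

Lemma pair_sum_addp m :
  pair_sum (label_weight p) (m + p) = pair_sum (label_weight p) m + m%:R *+ 2 + p%:R - 1.
Proof.
have split_sum (F : nat -> int) :
    \sum_(0 <= a < m + p) F a = \sum_(0 <= a < m) F a + \sum_(m <= a < m + p) F a.
  by rewrite (@big_cat_nat _ _ _ m) // leq_addr.
have window_r a : \sum_(m <= b < m + p) label_weight p (a + b + 2) = 1.
  by rewrite -(sum_window_label_weight (a + 2) m); apply: eq_bigr => b _; rewrite addnAC addnC addnA.
have window_l a : \sum_(m <= b < m + p) label_weight p (b + a + 2) = 1.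
  by rewrite -(sum_window_label_weight (a + 2) m); apply: eq_bigr => b _; rewrite addnA.
rewrite /pair_sum split_sum sum_window_label_weight_double.
rewrite (split_sum (fun a => \sum_(0 <= b < m + p) label_weight p (a + b + 2))).
under eq_bigr do rewrite split_sum window_r.
under [X in _ + X - _]eq_bigr do rewrite split_sum window_r.
rewrite !big_split /= [X in _ + (X + _) - _]exchange_big_nat /=.
under [X in _ + (X + _) - _]eq_bigr do rewrite window_l.
by rewrite !sumr_const_nat subn0 addKn mulr2n; ring.
Qed.

Lemma pair_sum_addMp r q :
  pair_sum (label_weight p) (r + q * p) =
  pair_sum (label_weight p) r + (r%:R * q%:R) *+ 2 + p%:R * q%:R ^+ 2 - q%:R.
Proof.
elim: q => [|q IHq]; first by rewrite mul0n addn0 mulr2n; ring.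
by rewrite mulSnr addnA pair_sum_addp IHq natrD natrM -(addn1 q) natrD !mulr2n; ring.
Qed.

End LabelWeightSums.

(* For [s] in [[1, 2r + 1]], the number of ordered pairs of distinct [x, y]
   in [[1, r]] with [x + y = s]. *)
Definition pair_count (r s : nat) : int :=
  (if (s < r.+2)%N then s%:Z - 1 else 2 * r%:Z + 1 - s%:Z) - delta s.

Lemma delta_odd s : odd s -> delta s = 0.
Proof. by rewrite /delta => ->. Qed.

Lemma pair_countS r s : (s < (2 * r).+2)%N ->
  pair_count r.+1 s = pair_count r s + ((r.+2 <= s)%N)%:R *+ 2.
Proof.
move=> lt_s; rewrite /pair_count.
by case: (ltnP s r.+2) => h2; case: (ltnP s r.+3) => h3 /=; rewrite mulr2n; lia.
Qed.

Lemma pair_count_top r : pair_count r.+1 (2 * r).+2 = 0 /\ pair_count r.+1 (2 * r).+3 = 0.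
Proof.
rewrite /pair_count /delta !oddS oddM /=.
by split; case: ifP => h; lia.
Qed.

Lemma pair_sumS (g : nat -> int) r :
  pair_sum g r.+1 = pair_sum g r + (\sum_(r.+2 <= s < (2 * r).+2) g s) *+ 2.
Proof.
have shifted (F : nat -> nat) : (forall i, F i = i + r.+2)%N ->
    \sum_(0 <= i < r) g (F i) = \sum_(r.+2 <= s < (2 * r).+2) g s.
  move=> FE; rewrite (_ : (2 * r).+2 = r + r.+2)%N; last by lia.
  by rewrite -{1}[r.+2]add0n big_addn addnK; apply: eq_bigr => i _; rewrite FE.
rewrite /pair_sum big_nat_recr //= [X in _ - X]big_nat_recr //=.
under eq_bigr do rewrite big_nat_recr //=.
rewrite big_nat_recr //= big_split /=.
rewrite (shifted (fun i => i + r + 2)%N) => [|i]; last by lia.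
rewrite (shifted (fun i => r + i + 2)%N) => [|i]; last by lia.
by rewrite (_ : (r + r + 2 = 2 * r + 2)%N) ?mulr2n; [ring | lia].
Qed.

Lemma pair_sum_count (g : nat -> int) r :
  pair_sum g r = \sum_(1 <= s < (2 * r).+2) pair_count r s * g s.
Proof.
elim: r => [|r IHr].
  by rewrite big_nat1 /pair_sum !big_geq // /pair_count /delta /= !subrr mul0r.
have [top2 top3] := pair_count_top r.
rewrite (_ : (2 * r.+1).+2 = (2 * r).+4)%N; last by lia.
rewrite big_nat_recr // big_nat_recr //= top2 top3 !mul0r !addr0.
rewrite pair_sumS IHr (eq_big_nat _ _ (fun s hs => congr1 (fun c => c * g s)
  (pair_countS (s := s) (proj2 (andP hs))))).
under [in RHS]eq_bigr do rewrite mulrDl mulrnAl.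
rewrite big_split /= sumrMnl; congr (_ + _ *+ 2).
rewrite [RHS](@big_cat_nat _ _ _ r.+2) //=; last by lia.
rewrite [X in _ = X + _]big1_seq ?add0r => [|s /andP[_]].
  by apply: eq_big_nat => s /andP[le_s _]; rewrite le_s mul1r.
by rewrite mem_index_iota => /andP[_ lt_s]; rewrite ltnNge -ltnS lt_s mul0r.
Qed.

Section SmallPairSums.
Variables p r : nat.
Hypotheses (p_prime : prime p) (p_odd : odd p) (lt_rp : (r < p)%N).

Lemma sum_pair_count_prime :
  \sum_(1 <= s < (2 * r).+2 | s == p) pair_count r s * label_weight p s
  = Num.max 0 (2 * r%:Z - p%:Z + 1).
Proof.
rewrite big_nat1_eq /label_weight dvdnn mulr1 /pair_count delta_odd // subr0 maxEle.
have := prime_gt1 p_prime.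
case: ifP => [/andP[_ lt_p]|/negbT out_range] p_gt1.
  by rewrite [in RHS]ifT; [case: ifP => lt_p2|]; lia.
by rewrite ifF //; lia.
Qed.

Lemma sum_pair_count_legendre :
  \sum_(1 <= s < (2 * r).+2 | s != p) pair_count r s * label_weight p s
  = - (\sum_(2 <= s < r.+2 | s != p) ((s%:Z - 1 - delta s) * legendre p s) +
       \sum_(r.+2 <= s < (2 * r).+1 | s != p)
         ((2 * r%:Z - s%:Z + 1 - delta s) * legendre p s)).
Proof.
have weightE s : (0 < s < (2 * r).+2)%N -> s != p ->
    label_weight p s = - legendre p s.
  move=> /andP[s_gt0 lt_s] neq_sp; rewrite /label_weight ifN //.
  apply: contra neq_sp => /dvdnP[[|[|k]] sE]; rewrite sE ?mul1n //; lia.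
have p_neq1 : 1 != p by rewrite eq_sym neq_ltn prime_gt1 ?orbT.
rewrite big_nat_cond (eq_bigr (fun s => - (pair_count r s * legendre p s))) => [|s].
  rewrite -big_nat_cond sumrN (@big_cat_nat _ _ _ r.+2) //=; last by lia.
  congr (- (_ + _)).
    rewrite big_ltn_cond // p_neq1 {1}/pair_count /delta /= subrr mul0r add0r.
    rewrite big_nat_cond [RHS]big_nat_cond; apply: eq_bigr => s /andP[/andP[_ lt_s] _].
    by rewrite /pair_count lt_s.
  have [->|r_gt0] := posnP r; first by rewrite !big_geq.
  have top : pair_count r (2 * r).+1 = 0.
    by rewrite /pair_count ifN ?delta_odd ?oddS ?oddM //; lia.
  rewrite big_mkcond [RHS]big_mkcond big_nat_recr /=; last by lia.
  rewrite top mul0r if_same addr0; apply: eq_big_nat => s /andP[le_s _].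
  by rewrite /pair_count ltnNge le_s /= [_ + 1 - _]addrAC.
by case/andP=> range neq_sp; rewrite weightE ?mulrN.
Qed.

Lemma pair_sum_label_weight_small :
  pair_sum (label_weight p) r =
  Num.max 0 (2 * r%:Z - p%:Z + 1) -
  (\sum_(2 <= s < r.+2 | s != p) ((s%:Z - 1 - delta s) * legendre p s) +
   \sum_(r.+2 <= s < (2 * r).+1 | s != p)
     ((2 * r%:Z - s%:Z + 1 - delta s) * legendre p s)).
Proof.
rewrite pair_sum_count (bigID (fun s => s == p)) /=.
by rewrite sum_pair_count_prime // sum_pair_count_legendre.
Qed.

End SmallPairSums.

Lemma sumr_pred_card (T : finType) (E : {set T}) (P : pred T) :
  \sum_(e in E) ((P e : nat)%:R : int) = #|[set e in E | P e]|%:R.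
Proof.
rewrite -sumr_indicator [LHS]big_mkcond; apply: eq_bigr => e _; rewrite !inE.
by case: (e \in E); case: (P e).
Qed.

Lemma num_edges_label_diff p n (f : 'I_n -> nat) :
  (num_edges_label p f 0)%:R - (num_edges_label p f 1)%:R =
  \sum_(e in Kn_edges n) label_weight p (\sum_(v in e) f v)%N :> int.
Proof.
rewrite /num_edges_label -!sumr_pred_card -sumrB; apply: eq_bigr => e _.
by rewrite /edge_label /label_weight /legendre; case: (p %| _)%N; case: quad_res.
Qed.

Lemma card_ordered_pairs_edge n (e : {set 'I_n}) : e \in Kn_edges n ->
  #|[set x : 'I_n * 'I_n | (x.1 != x.2) && ([set x.1; x.2] == e)]| = 2%N.
Proof.
rewrite inE => /cards2P[a [b [neq_ab ->]]].
have -> : [set x : 'I_n * 'I_n | (x.1 != x.2) && ([set x.1; x.2] == [set a; b])]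
    = [set (a, b); (b, a)].
  apply/setP => [[x y]]; rewrite !inE /=; apply/idP/idP.
  - case/andP => neq_xy /eqP xy_ab.
    have x_ab : x \in [set a; b] by rewrite -xy_ab !inE eqxx.
    have y_ab : y \in [set a; b] by rewrite -xy_ab !inE eqxx orbT.
    move: x_ab y_ab neq_xy; rewrite !inE => /orP[]/eqP-> /orP[]/eqP-> neq_xy;
      rewrite ?eqxx ?orbT //; by rewrite eqxx in neq_xy.
  - case/orP => /eqP[-> ->]; rewrite ?neq_ab //= eq_sym neq_ab /=.
    by rewrite setUC.
rewrite cards2; case: eqP => // [[eq_ab _]]; by move: neq_ab; rewrite eq_ab eqxx.
Qed.

Lemma sum_edges_ordered_pairs (g : nat -> int) n (f : 'I_n -> nat) :
  (\sum_(e in Kn_edges n) g (\sum_(v in e) f v)%N) *+ 2 =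
  \sum_(x : 'I_n * 'I_n | x.1 != x.2) g (f x.1 + f x.2)%N.
Proof.
have pairE (x : 'I_n * 'I_n) : x.1 != x.2 ->
    g (f x.1 + f x.2)%N = g (\sum_(v in [set x.1; x.2]) f v)%N.
  by move=> neq_x; rewrite big_setU1 ?big_set1 // inE.
rewrite [RHS](eq_bigr _ pairE).
rewrite (partition_big (fun x : 'I_n * 'I_n => [set x.1; x.2]) (mem (Kn_edges n)))
  => [|[a b] /= neq_ab]; last by rewrite inE cards2 neq_ab.
rewrite -sumrMnl; apply: eq_bigr => e e_edge.
rewrite (eq_bigr (fun _ => g (\sum_(v in e) f v)%N)) => [|x /andP[_ /eqP-> //]].
rewrite -(card_ordered_pairs_edge e_edge) -sumr_const.
by apply: eq_bigl => x; rewrite inE.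
Qed.

Lemma sum_ordered_pairs_pair_sum (g : nat -> int) n (f : 'I_n -> nat) :
  injective f -> (forall v, (1 <= f v <= n)%N) ->
  \sum_(x : 'I_n * 'I_n | x.1 != x.2) g (f x.1 + f x.2)%N = pair_sum g n.
Proof.
move=> f_inj f_range.
have lt_fn u : ((f u).-1 < n)%N by have := f_range u; lia.
pose f' u : 'I_n := Ordinal (lt_fn u).
have fE u : f u = (f' u).+1 by rewrite /= prednK //; case/andP: (f_range u).
have f'_inj : injective f'.
  by move=> u v /(congr1 val) /= eq_uv; apply: f_inj; rewrite (fE u) (fE v) /= eq_uv.
have reindex (F : 'I_n -> int) : \sum_u F (f' u) = \sum_a F a.
  by rewrite [RHS](reindex_inj f'_inj).
rewrite -(pair_big_dep xpredT (fun u v => u != v) (fun u v => g (f u + f v)%N)) /=.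
have offdiag u : \sum_(v | u != v) g (f u + f v)%N =
    \sum_v g (f u + f v)%N - g (f u + f u)%N.
  by rewrite [X in _ = X - _](bigD1 u) //= addrC addrK; apply: eq_bigl => v; rewrite eq_sym.
rewrite (eq_bigr _ (fun u _ => offdiag u)) sumrB /pair_sum !big_mkord.
congr (_ - _).
  rewrite (eq_bigr (fun u => \sum_(b < n) g ((f' u).+1 + b.+1)%N)) => [|u _].
    rewrite (reindex (fun a => \sum_(b < n) g (a.+1 + b.+1)%N)).
    apply: eq_bigr => a _; rewrite big_mkord; apply: eq_bigr => b _; congr g; lia.
  by rewrite -(reindex (fun b => g ((f' u).+1 + b.+1)%N)); apply: eq_bigr => v _; rewrite !fE.
rewrite (eq_bigr (fun u => g ((f' u).+1 + (f' u).+1)%N)) => [|u _]; last by rewrite fE.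
by rewrite (reindex (fun a => g (a.+1 + a.+1)%N)); apply: eq_bigr => a _; congr g; lia.
Qed.

Theorem mainTheorem5 (p n : nat) (f : 'I_n -> nat) :
  prime p -> odd p -> (1 <= n)%N ->
  injective f -> (forall v, (1 <= f v <= n)%N) ->
  let q := (n %/ p)%N in
  let r := (n - q * p)%N in
  let psi : int := Num.max 0 (2 * r%:Z - p%:Z + 1) in
  let S1 : int := \sum_(2 <= s < r.+2 | s != p)
                    ((s%:Z - 1 - delta s) * legendre p s) in
  let S2 : int := \sum_(r.+2 <= s < (2 * r).+1 | s != p)
                    ((2 * r%:Z - s%:Z + 1 - delta s) * legendre p s) in
  let S := S1 + S2 in
  (num_edges_label p f 0)%:R - (num_edges_label p f 1)%:R
    = (1 / 2 : rat) * (2 * n%:Z * q%:Z - p%:Z * q%:Z ^+ 2 - q%:Z + psi)%:~R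
      - (1 / 2 : rat) * S%:~R.
Proof.
move=> p_prime p_odd _ f_inj f_range q r psi S1 S2 S.
have n_eq : n = (r + q * p)%N by rewrite subnK // leq_divM.
have lt_rp : (r < p)%N.
  by rewrite /r /q {1}(divn_eq n p) addKn ltn_pmod ?prime_gt0.
have twice_diff : ((num_edges_label p f 0)%:R - (num_edges_label p f 1)%:R : int) *+ 2
    = 2 * n%:Z * q%:Z - p%:Z * q%:Z ^+ 2 - q%:Z + psi - S.
  rewrite num_edges_label_diff sum_edges_ordered_pairs sum_ordered_pairs_pair_sum //.
  rewrite {1}n_eq pair_sum_addMp // pair_sum_label_weight_small // -/S1 -/S2 -/S -/psi.
  rewrite n_eq PoszD PoszM !natz mulr2n; ring.
have := congr1 (fun z : int => (z%:~R : rat)) twice_diff; rewrite /= rmorphMn rmorphB /=.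
by rewrite !rmorph_nat intrB mulr2n; lra.
Qed.
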